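(* $\mathcal{A}(\bm{p})$ is a coherent ring: every finitely generated ideal $I$ of $\mathcal{A}(\bm{p})$ is finitely presented, i.e. there is an exact sequence of $\mathcal{A}(\bm{p})$-modules $0\to K\to F\to I\to0$ with $F$ finitely generated free and $K$ finitely generated.
   Context: Fix $\bm{p}:\mathbb{N}_0\to(0,\infty)$ with $\lim_{n\to\infty}\bm{p}(n)^{1/n}=\infty$. For an entire function $f$ write $f(z)=\sum_{n\ge0}\widehat f(n)z^n$. $\mathcal{A}(\bm{p})$ is the set of entire functions $f$ with $\sup_{n\ge 0}\bm{p}(n)|\widehat f(n)|<\infty$, with pointwise addition and scalar multiplication and the weighted Hadamard product $(f\ast g)(z)=\sum_{n\ge0}\bm{p}(n)\widehat f(n)\widehat g(n)z^n$; it is a commutative unital ring with unit $\varepsilon(z)=\sum_{n\ge0}\frac{z^n}{\bm{p}(n)}$. *)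

From Stdlib Require Import Reals.
From Coquelicot Require Import Coquelicot.
Open Scope R_scope.

(* An entire function f is represented by its Taylor coefficient sequence
   a : nat -> C (a n = \hat f(n)).  The weight p : nat -> R. *)

(* membership in A(p): entire with sup_n p(n) |\hat f(n)| < oo.
   (Entireness, limsup |a n|^(1/n) = 0, follows from the bound since
   p(n)^(1/n) -> oo; we state it explicitly anyway.) *)
Definition entire_coeffs (a : nat -> C) : Prop :=
  forall r : R, 0 <= r -> ex_series (fun n => Cmod (a n) * r ^ n).

Definition inA (p : nat -> R) (a : nat -> C) : Prop :=
  entire_coeffs a /\ exists M : R, forall n, p n * Cmod (a n) <= M.

Definition hmul (p : nat -> R) (a b : nat -> C) : nat -> C :=
  fun n => (RtoC (p n) * a n * b n)%C.

Fixpoint csum (m : nat) (f : nat -> C) : C :=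
  match m with
  | O => RtoC 0
  | S k => (csum k f + f k)%C
  end.

(* A(p)-linear combination  sum_{i<m} x_i * g_i  (ring product = hmul) *)
Definition lincomb (p : nat -> R) (m : nat) (x g : nat -> nat -> C) : nat -> C :=
  fun k => csum m (fun i => hmul p (x i) (g i) k).

Definition in_ideal_gen (p : nat -> R) (m : nat) (g : nat -> nat -> C)
    (f : nat -> C) : Prop :=
  exists x : nat -> nat -> C,
    (forall i, (i < m)%nat -> inA p (x i)) /\
    forall k, f k = lincomb p m x g k.

Definition in_kernel (p : nat -> R) (n : nat) (h : nat -> nat -> C)
    (x : nat -> nat -> C) : Prop :=
  (forall i, (i < n)%nat -> inA p (x i)) /\
  forall k, lincomb p n x h k = RtoC 0.

(* the kernel of  A(p)^n -> A(p), e_i |-> h_i  is a finitely generated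
   A(p)-submodule of A(p)^n : generated by vectors ks_0, ..., ks_{r-1}
   (ks j i = i-th component of the j-th generator) *)
Definition kernel_fin_gen (p : nat -> R) (n : nat) (h : nat -> nat -> C) : Prop :=
  exists (r : nat) (ks : nat -> nat -> nat -> C),
    (forall j, (j < r)%nat -> in_kernel p n h (ks j)) /\
    forall x, in_kernel p n h x ->
      exists c : nat -> nat -> C,
        (forall j, (j < r)%nat -> inA p (c j)) /\
        forall i, (i < n)%nat -> forall k,
          x i k = lincomb p r c (fun j => ks j i) k.

From Stdlib Require Import Reals Lra Lia Psatz.
From Coquelicot Require Import Coquelicot.
Open Scope R_scope.

(* Coefficientwise, the weighted Hadamard product is pointwise
   multiplication up to the weight: (f * g)^(k) = p(k) f^(k) g^(k).  Hence
   f |-> (p(k) f^(k))_k identifies A(p) with the bounded sequences, and the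
   growth of p makes every such sequence the coefficient sequence of an entire
   function.  In this picture coherence is pointwise linear algebra: for the
   generators g_0, ..., g_{m-1} fix k, let v = (g_i^(k))_i and let
     P_ij = delta_ij - v_j conj(v_i) / |v|^2
   be (up to transposition) the orthogonal projector onto the complement of v.
   Its columns lie in the kernel of x |-> sum_i x_i v_i, it fixes every vector
   of that kernel, and its entries are bounded by 2.  Dividing by p(k) turns
   the columns into m elements of A(p)^m generating the kernel, so the ideal is
   presented by its own generators with m relations. *)

(* A sequence with bounded weighted coefficients p(n)|a_n| is entire, because
   p(n) = q_n^n with q_n -> +oo, so |a_n| r^n <= M (r/q_n)^n is eventually
   dominated by a geometric series. *)

Lemma weight_as_power (c : R) (n : nat) :
  0 < c -> n <> O -> c = Rpower c (/ INR n) ^ n.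
Proof.
  intros hc hn.
  rewrite <- Rpower_pow by (unfold Rpower; apply exp_pos).
  rewrite Rpower_mult, Rinv_l by (apply not_0_INR; exact hn).
  symmetry; apply Rpower_1, hc.
Qed.

Lemma entire_of_weighted_bound (p : nat -> R) (a : nat -> C) (M : R)
  (p_pos : forall n, 0 < p n)
  (p_growth : is_lim_seq (fun n => Rpower (p n) (/ INR n)) p_infty)
  (hb : forall n, p n * Cmod (a n) <= M) : entire_coeffs a.
Proof.
  intros r hr.
  assert (HM : 0 <= M).
  { specialize (hb O). pose proof (p_pos O). pose proof (Cmod_ge_0 (a O)). nra. }
  apply is_lim_seq_spec in p_growth. destruct (p_growth (2 * (r + 1))) as [N HN].
  apply (ex_series_incr_n _ (S N)).
  apply (@ex_series_le R_AbsRing R_CompleteNormedModule _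
           (fun k => M * (/ 2) ^ (S N + k))).
  - intros k. set (n := (S N + k)%nat).
    specialize (HN n ltac:(unfold n; lia)).
    set (q := Rpower (p n) (/ INR n)) in *.
    assert (Hq : 0 < q) by (unfold q, Rpower; apply exp_pos).
    assert (Hpq : p n = q ^ n) by (apply weight_as_power; [apply p_pos | unfold n; lia]).
    assert (Hqn : 0 < q ^ n) by (apply pow_lt, Hq).
    assert (Ha : Cmod (a n) <= M / q ^ n).
    { rewrite <- Hpq. apply Rmult_le_reg_l with (p n); [apply p_pos|].
      specialize (hb n). pose proof (p_pos n). field_simplify; lra. }
    assert (Hr : r ^ n <= (/ 2) ^ n * q ^ n).
    { rewrite <- Rpow_mult_distr. apply pow_incr. lra. }
    change (norm (Cmod (a n) * r ^ n)) with (Rabs (Cmod (a n) * r ^ n)).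
    pose proof (Cmod_ge_0 (a n)). pose proof (pow_le r n hr).
    rewrite Rabs_pos_eq by nra.
    apply Rle_trans with (M / q ^ n * ((/ 2) ^ n * q ^ n)).
    + apply Rmult_le_compat; auto.
    + right. field. lra.
  - apply (ex_series_incr_n (fun k => M * (/ 2) ^ k)).
    apply (ex_series_scal_l M (fun k => (/ 2) ^ k)). apply ex_series_geom.
    rewrite Rabs_pos_eq; lra.
Qed.

Lemma inA_of_weighted_bound (p : nat -> R) (a : nat -> C) (M : R)
  (p_pos : forall n, 0 < p n)
  (p_growth : is_lim_seq (fun n => Rpower (p n) (/ INR n)) p_infty)
  (hb : forall n, p n * Cmod (a n) <= M) : inA p a.
Proof.
  split; [exact (entire_of_weighted_bound p a M p_pos p_growth hb) | exists M; exact hb].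
Qed.

Lemma csum_ext m f f' : (forall i, (i < m)%nat -> f i = f' i) -> csum m f = csum m f'.
Proof.
  induction m as [|m IH]; intros H; simpl; auto.
  rewrite IH by (intros; apply H; lia). rewrite H by lia. reflexivity.
Qed.

Lemma csum_plus m f f' : csum m (fun i => f i + f' i)%C = (csum m f + csum m f')%C.
Proof. induction m as [|m IH]; simpl; [ring | rewrite IH; ring]. Qed.

Lemma csum_scal m c f : csum m (fun i => c * f i)%C = (c * csum m f)%C.
Proof. induction m as [|m IH]; simpl; [ring | rewrite IH; ring]. Qed.

Lemma csum0 m : csum m (fun _ => RtoC 0) = RtoC 0.
Proof. induction m as [|m IH]; simpl; [reflexivity | rewrite IH; ring]. Qed.

Lemma lincomb_pointwise p m x h k :
  lincomb p m x h k = (RtoC (p k) * csum m (fun i => x i k * h i k))%C.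
Proof.
  unfold lincomb. rewrite <- csum_scal. apply csum_ext. intros i _. unfold hmul. ring.
Qed.

Lemma csum_unweight (c : R) m f :
  c <> 0 -> (RtoC c * csum m (fun i => RtoC (/ c) * f i))%C = csum m f.
Proof.
  intros hc. rewrite csum_scal, Cmult_assoc, <- RtoC_mult, Rinv_r by exact hc. ring.
Qed.

Definition dl (i j : nat) : C := if Nat.eq_dec i j then RtoC 1 else RtoC 0.

Lemma dl_sym i j : dl i j = dl j i.
Proof. unfold dl. destruct (Nat.eq_dec i j), (Nat.eq_dec j i); congruence. Qed.

Lemma csum_dl m i x : (i < m)%nat -> csum m (fun j => dl i j * x j)%C = x i.
Proof.
  induction m as [|m IH]; intros H; [lia|]. simpl. unfold dl at 2.
  destruct (Nat.eq_dec i m) as [->|ne].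
  - rewrite (csum_ext _ _ (fun _ => RtoC 0)), csum0; [ring|].
    intros j Hj. unfold dl. destruct (Nat.eq_dec m j); [lia | ring].
  - rewrite IH by lia. ring.
Qed.

Fixpoint rsum (m : nat) (f : nat -> R) : R :=
  match m with O => 0 | S k => rsum k f + f k end.

Lemma rsum_nonneg m f : (forall i, 0 <= f i) -> 0 <= rsum m f.
Proof. intros H; induction m as [|m IH]; simpl; [lra | specialize (H m); lra]. Qed.

Lemma rsum_ge_term m f i : (forall i, 0 <= f i) -> (i < m)%nat -> f i <= rsum m f.
Proof.
  intros H Hi; induction m as [|m IH]; simpl; [lia|].
  destruct (Nat.eq_dec i m) as [->|ne].
  - pose proof (rsum_nonneg m f H). lra.
  - specialize (IH ltac:(lia)). specialize (H m). lra.
Qed.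

Definition sqnorm (m : nat) (v : nat -> C) : R := rsum m (fun l => Cmod (v l) ^ 2).

Lemma sqnorm_nonneg m v : 0 <= sqnorm m v.
Proof. apply rsum_nonneg. intros; apply pow2_ge_0. Qed.

Lemma sqnorm_ge_coord m v i : (i < m)%nat -> Cmod (v i) ^ 2 <= sqnorm m v.
Proof. apply (rsum_ge_term m (fun l => Cmod (v l) ^ 2)). intros; apply pow2_ge_0. Qed.

Lemma sqnorm_csum m v : RtoC (sqnorm m v) = csum m (fun l => v l * Cconj (v l))%C.
Proof.
  unfold sqnorm. induction m as [|m IH]; cbn [rsum csum]; [reflexivity|].
  rewrite RtoC_plus, IH, <- Cmod2_conj. reflexivity.
Qed.

Lemma sqnorm_zero m v i : sqnorm m v = 0 -> (i < m)%nat -> v i = RtoC 0.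
Proof.
  intros H Hi. apply Cmod_eq_0.
  pose proof (sqnorm_ge_coord m v i Hi). pose proof (Cmod_ge_0 (v i)). simpl in *. nra.
Qed.

Section Projector.
Variables (m : nat) (v : nat -> C).

Definition proj (i j : nat) : C :=
  (dl i j - v j * Cconj (v i) * RtoC (/ sqnorm m v))%C.

Lemma proj_annihilates j : (j < m)%nat -> csum m (fun i => proj i j * v i)%C = RtoC 0.
Proof.
  intros Hj.
  rewrite (csum_ext _ _ (fun i => dl j i * v i
             + (- (v j * RtoC (/ sqnorm m v))) * (v i * Cconj (v i)))%C)
    by (intros i _; unfold proj; rewrite dl_sym; ring).
  rewrite csum_plus, csum_scal, csum_dl, <- sqnorm_csum by exact Hj.
  destruct (Req_dec (sqnorm m v) 0) as [H0|H0].
  - rewrite (sqnorm_zero m v j H0 Hj). ring.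
  - transitivity (v j * (1 - RtoC (/ sqnorm m v * sqnorm m v)))%C;
      [rewrite RtoC_mult; ring | rewrite Rinv_l by exact H0; ring].
Qed.

Lemma proj_fixes_kernel x i :
  (i < m)%nat -> csum m (fun j => x j * v j)%C = RtoC 0 ->
  csum m (fun j => x j * proj i j)%C = x i.
Proof.
  intros Hi H.
  rewrite (csum_ext _ _ (fun j => dl i j * x j
             + (- (Cconj (v i) * RtoC (/ sqnorm m v))) * (x j * v j))%C)
    by (intros j _; unfold proj; ring).
  rewrite csum_plus, csum_scal, csum_dl, H by exact Hi. ring.
Qed.

Lemma proj_bound i j : (i < m)%nat -> (j < m)%nat -> Cmod (proj i j) <= 2.
Proof.
  intros Hi Hj. unfold proj, Cminus. eapply Rle_trans; [apply Cmod_triangle|].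
  assert (Hd : Cmod (dl i j) <= 1).
  { unfold dl. destruct (Nat.eq_dec i j); rewrite Cmod_R, Rabs_pos_eq; lra. }
  enough (Cmod (v j * Cconj (v i) * RtoC (/ sqnorm m v)) <= 1)
    by (rewrite Cmod_opp; lra).
  rewrite !Cmod_mult, Cmod_conj, Cmod_R.
  destruct (Req_dec (sqnorm m v) 0) as [H0|H0].
  - rewrite (sqnorm_zero m v j H0 Hj), Cmod_0. lra.
  - pose proof (sqnorm_nonneg m v) as HS.
    pose proof (sqnorm_ge_coord m v i Hi). pose proof (sqnorm_ge_coord m v j Hj).
    pose proof (Cmod_ge_0 (v i)). pose proof (Cmod_ge_0 (v j)). simpl in *.
    rewrite Rabs_pos_eq by (left; apply Rinv_0_lt_compat; lra).
    assert (Cmod (v j) * Cmod (v i) <= sqnorm m v) by nra.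
    apply Rmult_le_reg_r with (sqnorm m v); [lra|].
    replace (Cmod (v j) * Cmod (v i) * / sqnorm m v * sqnorm m v)
      with (Cmod (v j) * Cmod (v i)) by (field; lra).
    lra.
Qed.

End Projector.

(* The kernel generators: the columns of the coefficientwise projector for the
   generators g, divided by the weight; kernel_gens p m g j is the j-th
   generator and kernel_gens p m g j i its i-th component. *)
Definition kernel_gens (p : nat -> R) (m : nat) (g : nat -> nat -> C)
    (j i k : nat) : C :=
  (RtoC (/ p k) * proj m (fun l => g l k) i j)%C.

Section KernelGenerators.
Variables (p : nat -> R) (m : nat) (g : nat -> nat -> C).
Hypothesis p_pos : forall n, 0 < p n.

Let p_ne0 (k : nat) : p k <> 0.
Proof. specialize (p_pos k). lra. Qed.

Lemma kernel_gens_inA j i :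
  is_lim_seq (fun n => Rpower (p n) (/ INR n)) p_infty ->
  (i < m)%nat -> (j < m)%nat -> inA p (kernel_gens p m g j i).
Proof.
  intros p_growth Hi Hj. apply (inA_of_weighted_bound p _ 2 p_pos p_growth). intros k.
  unfold kernel_gens.
  rewrite Cmod_mult, Cmod_R, Rabs_pos_eq, <- Rmult_assoc, Rinv_r, Rmult_1_l
    by (auto; left; apply Rinv_0_lt_compat, p_pos).
  apply proj_bound; auto.
Qed.

Lemma kernel_gens_relation j k :
  (j < m)%nat -> lincomb p m (kernel_gens p m g j) g k = RtoC 0.
Proof.
  intros Hj. rewrite lincomb_pointwise.
  rewrite (csum_ext _ _ (fun i => RtoC (/ p k) * (proj m (fun l => g l k) i j * g i k)))%C
    by (intros; unfold kernel_gens; ring).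
  rewrite csum_unweight by auto. apply proj_annihilates; exact Hj.
Qed.

(* Every relation x is the combination of the generators with coefficients x
   itself, since the projector fixes the kernel. *)
Lemma kernel_gens_span x i k :
  (i < m)%nat -> (forall k, lincomb p m x g k = RtoC 0) ->
  x i k = lincomb p m x (fun j => kernel_gens p m g j i) k.
Proof.
  intros Hi Hker.
  assert (Hpt : csum m (fun j => x j k * g j k)%C = RtoC 0).
  { pose proof (Hker k) as Hk. rewrite lincomb_pointwise in Hk.
    transitivity (RtoC (/ p k) * (RtoC (p k) * csum m (fun j => x j k * g j k)))%C.
    - rewrite Cmult_assoc, <- RtoC_mult, Rinv_l by auto. ring.
    - rewrite Hk. ring. }
  rewrite lincomb_pointwise.
  rewrite (csum_ext _ _ (fun j => RtoC (/ p k) * (x j k * proj m (fun l => g l k) i j)))%C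
    by (intros; unfold kernel_gens; ring).
  rewrite csum_unweight by auto. symmetry.
  exact (proj_fixes_kernel m (fun l => g l k) (fun j => x j k) i Hi Hpt).
Qed.

End KernelGenerators.

Theorem mainTheorem15 (p : nat -> R)
  (p_pos : forall n, 0 < p n)
  (p_growth : is_lim_seq (fun n => Rpower (p n) (/ INR n)) p_infty) :
  forall (m : nat) (g : nat -> nat -> C),
    (forall i, (i < m)%nat -> inA p (g i)) ->
    exists (n : nat) (h : nat -> nat -> C),
      (forall i, (i < n)%nat -> inA p (h i)) /\
      (forall f, in_ideal_gen p m g f <-> in_ideal_gen p n h f) /\
      kernel_fin_gen p n h.
Proof.
  intros m g Hg.
  exists m, g. split; [exact Hg | split; [tauto|]].
  exists m, (kernel_gens p m g). split.
  - intros j Hj. split.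
    + intros i Hi. exact (kernel_gens_inA p m g p_pos j i p_growth Hi Hj).
    + intros k. exact (kernel_gens_relation p m g p_pos j k Hj).
  - intros x [Hx Hker]. exists x. split; [exact Hx|].
    intros i Hi k. exact (kernel_gens_span p m g p_pos x i k Hi Hker).
Qed.
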